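(* Let $G_{\mathrm{AndI}}$ be the $q$-grammar with master variables $\{x,y\}$, rule $x_j\mapsto q^jx_jy_{j+1}$, $y_j\mapsto q^jx_j$, and order AIO, with $q$-derivative $D$. Let $\phi^{nc}$ be the $\mathbb{K}[q]$-linear multiplicative map sending $x_j\mapsto x$ and $y_j\mapsto y$ for all $j$, where $x,y$ are non-commuting indeterminates (so $\phi^{nc}(D^n(x_0))$ lies in the free algebra $\mathbb{K}[q]\langle x,y\rangle$). Then for $n\ge1$ the number of distinct monomials with nonzero coefficient in $\phi^{nc}(D^n(x_0))$ equals the Fibonacci number $F_{n+1}$, where $F_1=F_2=1$ and $F_{m+1}=F_m+F_{m-1}$.
   Context: $\mathbb{K}$ is a commutative ring with unity and characteristic zero, $q$ an indeterminate. For a set $S$ of master variables, $\mathbb{S}=\{s_i:s\in S,\ i\ge0\}$ is a set of non-commuting variables, $F(\mathbb{S})$ the free group on $\mathbb{S}$, $\mathbb{E}=\mathbb{K}[q][F(\mathbb{S})]$ its group algebra. A rule $R$ assigns to each $s_i$ an element of $\mathbb{E}$. The up-arrow $\uparrow$ is the linear map replacing each letter $s_i^{\pm1}$ by $s_{i+1}^{\pm1}$. AIO stably reorders the letters of a word according to the position of their underlying variable in $x_0,y_0,x_1,y_1,\dots$. The $q$-derivative of a $q$-grammar $(S,R,\rho)$ is the $\mathbb{K}[q]$-linear map with $D(w_1\cdots w_n)=\sum_{j=1}^n\rho\big(w_1\cdots w_{j-1}R(w_j)\uparrow(w_{j+1}\cdots w_n)\big)$ for letters $w_j$, $D^0=\mathrm{id}$,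 $D^k=D\circ D^{k-1}$. *)

From HB Require Import structures.
From mathcomp Require Import all_boot all_order all_algebra.
Set Implicit Arguments. Unset Strict Implicit. Unset Printing Implicit Defensive.
Import Order.TTheory GRing.Theory Num.Theory.
Local Open Scope ring_scope.

(* A letter s_i is encoded as (b, i) : bool * nat, with b = false for the
   master variable x and b = true for y.  Words are sequences of letters
   (only positive letters occur in D^n(x_0)). *)
Definition letter := (bool * nat)%type.
Definition word := seq letter.

Section Grammar.
Variable K : comNzRingType.

(* Elements of K[q][words] as formal sums: lists of (coefficient, word). *)
Definition elt := seq ({poly K} * word).

Definition coef_of (T : eqType) (e : seq ({poly K} * T)) (w : T) : {poly K} :=
  \sum_(p <- e | p.2 == w) p.1.

Definition up (w : word) : word := [seq (l.1, l.2.+1) | l <- w].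

(* AIO: stable reordering by position in x_0, y_0, x_1, y_1, ... *)
Definition aio_key (l : letter) : nat := (2 * l.2 + l.1)%N.
Definition AIO (w : word) : word :=
  sort (fun a b => aio_key a <= aio_key b)%N w.

Definition qder_word (R : letter -> elt) (rho : word -> word) (w : word) : elt :=
  flatten [seq [seq (cu.1, rho (take j w ++ cu.2 ++ up (drop j.+1 w)))
               | cu <- R (nth (false, 0%N) w j)]
          | j <- iota 0 (size w)].

Definition qder (R : letter -> elt) (rho : word -> word) (e : elt) : elt :=
  flatten [seq [seq (p.1 * d.1, d.2) | d <- qder_word R rho p.2] | p <- e].

Definition R_AndI (l : letter) : elt :=
  if l.1 then [:: ('X^(l.2), [:: (false, l.2)])]
  else [:: ('X^(l.2), [:: (false, l.2); (true, l.2.+1)])].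

Definition D_AndI : elt -> elt := qder R_AndI AIO.

Definition x0 : elt := [:: (1, [:: (false, 0%N)])].

(* phi^nc : x_j -> x, y_j -> y (non-commuting); monomials in K[q]<x,y>
   are words over {x,y}, encoded as seq bool. *)
Definition phi_nc (e : elt) : seq ({poly K} * seq bool) :=
  [seq (p.1, map fst p.2) | p <- e].

Definition num_monomials (T : eqType) (e : seq ({poly K} * T)) : nat :=
  size [seq w <- undup (map snd e) | coef_of e w != 0].

End Grammar.

Fixpoint fib (n : nat) : nat :=
  match n with
  | 0 => 0
  | 1 => 1
  | (m.+1 as m1).+1 => (fib m1 + fib m)%N
  end.

Definition char_zero (K : comNzRingType) : Prop :=
  forall n : nat, (0 < n)%N -> (n%:R : K) != 0.

From mathcomp Require Import all_boot all_order all_algebra.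
From mathcomp Require Import zify.
Set Implicit Arguments. Unset Strict Implicit. Unset Printing Implicit Defensive.
Import GRing.Theory.

(* Every word of D^n(x_0) has strictly increasing indices, so AIO acts
   trivially and each monomial of phi^nc(D w) arises from phi^nc(w) by
   rewriting one letter with x -> xy or y -> x.  Give x weight 2 and y
   weight 1: each rewrite raises the weight by one, and conversely every word
   x u of weight n + 3 comes from a word of weight n + 2 headed by x, by
   rewriting the first letter (x y v from x v) or the second one (x x v from
   x y v).  Hence the monomials are the words x u with u a composition of n
   into parts 1 and 2, of which there are F_(n+1).  Every coefficient is a sum
   of powers of q, hence nonzero in characteristic zero. *)

Lemma nat_ind2 (P : nat -> Prop) :
  P 0 -> P 1 -> (forall m, P m -> P m.+1 -> P m.+2) -> forall m, P m.
Proof.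
move=> P0 P1 PSS m; suff [] : P m /\ P m.+1 by [].
by elim: m => [|m [Pm PSm]]; split=> //; apply: PSS.
Qed.

Lemma mem_map_cons (T : eqType) (c b : T) s (S : seq (seq T)) :
  (b :: s \in map (cons c) S) = (b == c) && (s \in S).
Proof.
apply/mapP/andP => [[t tS [-> ->]] | [/eqP -> sS]]; last by exists s.
by rewrite eqxx.
Qed.

Definition weight (s : seq bool) : nat := sumn [seq if b then 1 else 2 | b <- s].

Lemma weight_cat s t : weight (s ++ t) = weight s + weight t.
Proof. by rewrite /weight map_cat sumn_cat. Qed.

Lemma weight_cons b s : weight (b :: s) = (if b then 1 else 2) + weight s.
Proof. by []. Qed.

Fixpoint words_of_weight (m : nat) : seq (seq bool) :=
  match m with
  | 0 => [:: [::]]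
  | 1 => [:: [:: true]]
  | (m'.+1 as m1).+1 =>
      map (cons true) (words_of_weight m1) ++ map (cons false) (words_of_weight m')
  end.

Lemma words_of_weightSS m : words_of_weight m.+2 =
  map (cons true) (words_of_weight m.+1) ++ map (cons false) (words_of_weight m).
Proof. by []. Qed.

Lemma mem_words_of_weight m s : (s \in words_of_weight m) = (weight s == m).
Proof.
elim/nat_ind2: m s => [||m IHm IHSm] [|[] s] //.
- by rewrite inE eqseq_cons weight_cons; case: s => [|[] s].
- by rewrite words_of_weightSS mem_cat; apply/norP; split; apply/mapP => -[].
- by rewrite words_of_weightSS mem_cat !mem_map_cons IHSm weight_cons orbF.
- by rewrite words_of_weightSS mem_cat !mem_map_cons IHm weight_cons.
Qed.

Lemma uniq_words_of_weight m : uniq (words_of_weight m).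
Proof.
elim/nat_ind2: m => [||m IHm IHSm] //.
rewrite words_of_weightSS cat_uniq !map_inj_uniq ?IHm ?IHSm ?andbT //;
  try by move=> ? ? [].
by apply/hasPn => _ /mapP[s _ ->]; rewrite mem_map_cons.
Qed.

Lemma size_words_of_weight m : size (words_of_weight m) = fib m.+1.
Proof.
elim/nat_ind2: m => [||m IHm IHSm] //.
by rewrite words_of_weightSS size_cat !size_map IHm IHSm.
Qed.

Definition xwords n : seq (seq bool) := map (cons false) (words_of_weight n).

Lemma mem_xwords n b t : (b :: t \in xwords n) = ~~ b && (weight t == n).
Proof. by rewrite mem_map_cons mem_words_of_weight; case: b. Qed.

Lemma uniq_xwords n : uniq (xwords n).
Proof. by rewrite map_inj_uniq ?uniq_words_of_weight // => ? ? []. Qed.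

Lemma size_xwords n : size (xwords n) = fib n.+1.
Proof. by rewrite size_map size_words_of_weight. Qed.

Definition rule_nc (c : bool) : seq bool := if c then [:: false] else [:: false; true].

Definition expand_at (s : seq bool) j : seq bool :=
  take j s ++ rule_nc (nth false s j) ++ drop j.+1 s.

Definition expansions (S : seq (seq bool)) : seq (seq bool) :=
  flatten [seq [seq expand_at s j | j <- iota 0 (size s)] | s <- S].

Lemma mem_expansions S s :
  reflect (exists2 s0, s0 \in S & exists2 j, j < size s0 & s = expand_at s0 j)
          (s \in expansions S).
Proof.
apply: (iffP flattenP) => [[_ /mapP[s0 s0S ->] /mapP[j]] | [s0 s0S [j js0 ->]]].
  by rewrite mem_iota => js0 ->; exists s0 => //; exists j.
by exists [seq expand_at s0 j | j <- iota 0 (size s0)]; apply/mapP;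
  [exists s0 | exists j; rewrite ?mem_iota].
Qed.

Lemma weight_rule_nc c : weight (rule_nc c) = (if c then 1 else 2).+1.
Proof. by case: c. Qed.

Lemma weight_expand_at s j : j < size s -> weight (expand_at s j) = (weight s).+1.
Proof.
move=> js; rewrite -[in RHS](cat_take_drop j s) (drop_nth false js).
by rewrite /expand_at !weight_cat weight_cons weight_rule_nc; lia.
Qed.

Lemma expand_at0 b t : expand_at (b :: t) 0 = rule_nc b ++ t.
Proof. by rewrite /expand_at /= drop0. Qed.

Lemma expand_atS b t j : expand_at (b :: t) j.+1 = b :: expand_at t j.
Proof. by []. Qed.

Lemma expansions_xwords S n : S =i xwords n -> expansions S =i xwords n.+1.
Proof.
move=> S_n s; apply/mem_expansions/idP => [[[|b t] + [j js ->]] | ] //.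
- rewrite S_n mem_xwords => /andP[/negPf -> /eqP wt]; case: j js => [|j] js.
    by rewrite expand_at0 /= mem_xwords weight_cons wt add1n eqxx.
  by rewrite expand_atS mem_xwords weight_expand_at // wt eqxx.
- case/mapP => t' + ->; rewrite mem_words_of_weight => /eqP; case: t' => [|[] t] // wt.
  + exists [:: false & t]; last by exists 0; rewrite ?expand_at0.
    rewrite weight_cons in wt; rewrite S_n mem_xwords; apply/eqP; lia.
  + exists [:: false, true & t]; last by exists 1; rewrite // expand_atS expand_at0.
    rewrite !weight_cons in wt; rewrite S_n mem_xwords weight_cons; apply/eqP; lia.
Qed.

Local Open Scope ring_scope.

Section MonomialCoefficients.
Variables (K : comNzRingType) (T : eqType).

Lemma coef_of_monomialsE (e : seq ({poly K} * T)) w k :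
  {in e, forall p, exists j, p.1 = 'X^j} ->
  (coef_of e w)`_k = (count (fun p => (p.2 == w) && (p.1 == 'X^k)) e)%:R.
Proof.
have eqXn i j : ('X^i == 'X^j :> {poly K}) = (i == j).
  apply/eqP/eqP => [/(congr1 (size : {poly K} -> nat))|-> //].
  by rewrite !size_polyXn => -[].
elim: e => [|p e IH] e_mono; first by rewrite /coef_of big_nil coef0.
rewrite /coef_of big_cons -/(coef_of e w) /= natrD -IH; last first.
  by move=> q qe; apply: e_mono; rewrite inE qe orbT.
have [j ->] := e_mono p (mem_head p e).
by case: (p.2 == w); rewrite /= ?add0r // coefD coefXn eqXn eq_sym.
Qed.

Lemma coef_of_monomials_neq0 (e : seq ({poly K} * T)) w :
  char_zero K -> {in e, forall p, exists j, p.1 = 'X^j} ->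
  w \in map snd e -> coef_of e w != 0.
Proof.
move=> charK e_mono /mapP[p pe ->]; have [k pk] := e_mono p pe.
have count_gt0 : (0 < count (fun q => (q.2 == p.2) && (q.1 == 'X^k)) e)%N.
  by rewrite -has_count; apply/hasP; exists p; rewrite ?pk ?eqxx.
apply: contra_neq (charK _ count_gt0) => cw0.
by rewrite -(coef_of_monomialsE _ k e_mono) cw0 coef0.
Qed.

End MonomialCoefficients.

Definition rule_word (l : letter) : word :=
  if l.1 then [:: (false, l.2)] else [:: (false, l.2); (true, l.2.+1)].

Definition derive_at (w : word) j : word :=
  take j w ++ rule_word (nth (false, 0%N) w j) ++ up (drop j.+1 w).

Definition increasing_indices (w : word) : bool := sorted ltn (map snd w).

Lemma AIO_increasing w : increasing_indices w -> AIO w = w.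
Proof.
move=> w_incr; apply: sorted_sort; first by move=> a b c; apply: leq_trans.
rewrite /increasing_indices sorted_map in w_incr; apply: sub_sorted w_incr.
by move=> a b /=; rewrite /aio_key; case: a.1; case: b.1 => /=; lia.
Qed.

Lemma increasing_derive_at w j :
  (j < size w)%N -> increasing_indices w -> increasing_indices (derive_at w j).
Proof.
move=> jw; rewrite /increasing_indices -[w in X in X -> _](cat_take_drop j).
rewrite (drop_nth (false, 0%N) jw) /derive_at.
set Q := drop j.+1 w; have map_snd_up : map snd (up Q) = map S (map snd Q).
  by rewrite /up -!map_comp.
have pathS i : path ltn i (map snd Q) -> path ltn i.+1 (map S (map snd Q)).
  by rewrite path_map.
rewrite !map_cat map_snd_up /rule_word.
case: (nth _ w j).1 => /=; rewrite !sorted_cat_cons => /andP[-> lQ] /=.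
  by apply: (path_le ltn_trans (ltnSn _)); apply: pathS.
by rewrite ltnSn pathS.
Qed.

Lemma map_fst_up w : map fst (up w) = map fst w.
Proof. by rewrite -map_comp. Qed.

Lemma map_fst_derive_at w j :
  (j < size w)%N -> map fst (derive_at w j) = expand_at (map fst w) j.
Proof.
move=> jw; rewrite /derive_at /expand_at !map_cat map_fst_up map_take map_drop.
by rewrite (nth_map (false, 0%N)) // /rule_word /rule_nc; case: (nth _ w j).1.
Qed.

Section Grammar.
Variable K : comNzRingType.

Lemma qder_word_AndIE w : qder_word (R_AndI K) AIO w =
  [seq ('X^((nth (false, 0%N) w j).2), AIO (derive_at w j)) | j <- iota 0 (size w)].
Proof.
rewrite /qder_word; elim: (iota 0 (size w)) => //= j js ->.
by rewrite /R_AndI /derive_at /rule_word; case: (nth _ w j) => [[] i].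
Qed.

Lemma D_AndIE (e : elt K) : D_AndI e =
  flatten [seq [seq (p.1 * 'X^((nth (false, 0%N) p.2 j).2), AIO (derive_at p.2 j))
               | j <- iota 0 (size p.2)] | p <- e].
Proof.
by congr flatten; apply: eq_map => p; rewrite qder_word_AndIE -map_comp.
Qed.

Lemma D_AndI_memP (e : elt K) q : q \in D_AndI e ->
  exists2 p, p \in e & exists2 j, (j < size p.2)%N &
    q = (p.1 * 'X^((nth (false, 0%N) p.2 j).2), AIO (derive_at p.2 j)).
Proof.
rewrite D_AndIE => /flattenP[_ /mapP[p pe ->] /mapP[j]].
by rewrite mem_iota => /andP[_ jp] ->; exists p => //; exists j.
Qed.

Lemma iter_D_AndI_monomial n :
  {in iter n (@D_AndI K) (x0 K), forall p, exists k, p.1 = 'X^k}.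
Proof.
elim: n => [|n IH] q /=; first by rewrite inE => /eqP ->; exists 0%N; rewrite expr0.
case/D_AndI_memP => p /IH[k ->] [j _ ->]; exists (k + (nth (false, 0%N) p.2 j).2)%N.
by rewrite exprD.
Qed.

Lemma iter_D_AndI_increasing n :
  {in iter n (@D_AndI K) (x0 K), forall p, increasing_indices p.2}.
Proof.
elim: n => [|n IH] q /=; first by rewrite inE => /eqP ->.
case/D_AndI_memP => p /IH p_incr [j jp ->] /=.
by rewrite AIO_increasing increasing_derive_at.
Qed.

Lemma phi_nc_words (e : elt K) : map snd (phi_nc e) = [seq map fst p.2 | p <- e].
Proof. by rewrite -map_comp. Qed.

Lemma phi_nc_D_AndI (e : elt K) : {in e, forall p, increasing_indices p.2} ->
  map snd (phi_nc (D_AndI e)) = expansions (map snd (phi_nc e)).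
Proof.
move=> e_incr; rewrite D_AndIE !phi_nc_words map_flatten /expansions -!map_comp.
congr flatten; apply/eq_in_map => p /e_incr p_incr /=; rewrite size_map -map_comp.
apply/eq_in_map => j; rewrite mem_iota => /andP[_ jp] /=.
by rewrite AIO_increasing ?increasing_derive_at // map_fst_derive_at.
Qed.

Lemma phi_nc_iter_D_AndI n : map snd (phi_nc (iter n (@D_AndI K) (x0 K))) =i xwords n.
Proof.
elim: n => [|n IH] //=.
by rewrite phi_nc_D_AndI; [apply: expansions_xwords IH | apply: iter_D_AndI_increasing].
Qed.

End Grammar.

Theorem proposition6p10 (K : comNzRingType) (HK : char_zero K) (n : nat) :
  (1 <= n)%N ->
  num_monomials (phi_nc (iter n (@D_AndI K) (x0 K))) = fib n.+1.
Proof.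
(* The count is also right for n = 0. *)
move=> _; set e := phi_nc _.
have e_mono : {in e, forall p, exists k, p.1 = 'X^k}.
  by move=> _ /mapP[p /iter_D_AndI_monomial pk ->].
rewrite /num_monomials (all_filterP _); last first.
  by apply/allP => w; rewrite mem_undup; apply: coef_of_monomials_neq0.
rewrite -size_xwords; apply/perm_size/uniq_perm; rewrite ?undup_uniq ?uniq_xwords //.
by move=> w; rewrite mem_undup phi_nc_iter_D_AndI.
Qed.
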